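(* Let $\overline Q$ be a stable $n$-translation quiver with $n$-translation $\tau$. (1) If $p_0=q_0p_0'$ and $p_1=q_1p_1'$ are paths with $t(p_0)=t(p_1)$ such that $q_0,q_1$ are bound paths with $0<l(q_0),l(q_1)\le n+1$, then there are bound paths $p_0'',p_1''$ with $s(p_0'')=s(p_1'')$, $t(p_0'')=t(p_0')$ and $t(p_1'')=t(p_1')$ such that $l(p_0)-l(p_1)=l(p_0')-l(p_0'')+l(p_1'')-l(p_1')$. (2) If $p_1=p_1'q_1$ and $p_2=p_2'q_2$ are paths with $s(p_1)=s(p_2)$ such that $q_1,q_2$ are bound paths with $0<l(q_1),l(q_2)\le n+1$, then there are bound paths $p_1'',p_2''$ with $t(p_1'')=t(p_2'')$, $s(p_1'')=s(p_1')$ and $s(p_2'')=s(p_2')$ such that $l(p_1)-l(p_2)=l(p_1')-l(p_1'')+l(p_2'')-l(p_2')$.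
   Context: $k$ is a field. Bound quivers $(Q_0,Q_1,\rho)$ have relations that are linear combinations of paths of equal length $\ge2$ with common source and target; paths are composed right to left ($qp$ means $p$ followed by $q$); $s(p),t(p),l(p)$ denote source, target, length; a bound path is a path with nonzero image in $kQ/(\rho)$. A stable $n$-translation quiver is the bound quiver of a graded self-injective algebra of Loewy length $n+2$ (generated in degrees $0$ and $1$), together with the bijection $\tau$ of its vertex set induced by the Nakayama permutation; every bound path of length $n+1$ goes from $\tau i$ to $i$ for some vertex $i$. *)

From HB Require Import structures.
From mathcomp Require Import all_boot all_order all_algebra.
Set Implicit Arguments.
Unset Strict Implicit.
Unset Printing Implicit Defensive.
Import Order.TTheory GRing.Theory Num.Theory.
Local Open Scope ring_scope.

(* A finite quiver: vertices V, arrows A, source sa, target ta.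
   A path is a pair (start vertex, list of arrows in order of traversal).
   Trivial paths e_v are (v, [::]). *)
Definition qpath (V A : finType) := (V * seq A)%type.

Fixpoint walk_ok {V A : finType} (sa ta : A -> V) (v : V) (s : seq A) : bool :=
  if s is a :: s' then (sa a == v) && walk_ok sa ta (ta a) s' else true.

Definition is_path {V A : finType} (sa ta : A -> V) (p : qpath V A) : bool :=
  walk_ok sa ta p.1 p.2.

Definition psrc {V A : finType} (p : qpath V A) : V := p.1.
Definition ptgt {V A : finType} (ta : A -> V) (p : qpath V A) : V :=
  foldl (fun _ a => ta a) p.1 p.2.
Definition plen {V A : finType} (p : qpath V A) : nat := size p.2.

(* composition  q p  =  "p followed by q"  (right-to-left convention);
   defined only when t(p) = s(q) *)
Definition pmul {V A : finType} (ta : A -> V) (q p : qpath V A)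
  : option (qpath V A) :=
  if ptgt ta p == psrc q then Some (psrc p, p.2 ++ q.2) else None.

(* Elements of the path algebra kQ as formal linear combinations of paths. *)
Definition kQ (k : fieldType) (V A : finType) := seq (k * qpath V A).

Section PathAlgebra.
Context {k : fieldType} {V A : finType} (sa ta : A -> V).

Definition kcoef (x : kQ k V A) (w : qpath V A) : k :=
  \sum_(e <- x | e.2 == w) e.1.
Definition kpath (p : qpath V A) : kQ k V A := [:: (1, p)].
Definition kadd (x y : kQ k V A) : kQ k V A := x ++ y.
Definition kscale (c : k) (x : kQ k V A) : kQ k V A :=
  [seq (c * e.1, e.2) | e <- x].
Definition ksub (x y : kQ k V A) : kQ k V A := x ++ kscale (-1) y.
Definition kmul (x y : kQ k V A) : kQ k V A :=
  flatten [seq pmap (fun f => omap (fun w => (e.1 * f.1, w)) (pmul ta e.2 f.2)) y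
          | e <- x].

Definition relation_ok (r : kQ k V A) : Prop :=
  exists (i j : V) (l : nat), (2 <= l)%N /\
    all (fun e => [&& is_path sa ta e.2, psrc e.2 == i, ptgt ta e.2 == j
                    & plen e.2 == l]) r.

(* membership in the two-sided ideal (rho) of kQ: x equals (coefficientwise,
   on paths) a finite sum  sum c * a r b  with a, b paths and r in rho *)
Definition in_ideal (rho : kQ k V A -> Prop) (x : kQ k V A) : Prop :=
  exists ts : seq (k * qpath V A * kQ k V A * qpath V A),
    (forall t, t \in ts ->
       [/\ rho t.1.2, is_path sa ta t.1.1.2 & is_path sa ta t.2]) /\
    forall w, is_path sa ta w ->
      kcoef x w = \sum_(t <- ts)
        t.1.1.1 * kcoef (kmul (kmul (kpath t.1.1.2) t.1.2) (kpath t.2)) w.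

(* congruence modulo (rho): equality in A = kQ/(rho) *)
Definition kcongr (rho : kQ k V A -> Prop) (x y : kQ k V A) : Prop :=
  in_ideal rho (ksub x y).

Definition bound (rho : kQ k V A -> Prop) (p : qpath V A) : Prop :=
  is_path sa ta p /\ ~ in_ideal rho (kpath p).

(* A = kQ/(rho) is (right) self-injective: A_A is injective, stated via
   Baer's criterion.  A right ideal of A is represented by its preimage J in
   kQ (containing (rho)), and a right A-linear map J/(rho) -> A by a
   representative function f. *)
Definition self_injective (rho : kQ k V A -> Prop) : Prop :=
  forall (J : kQ k V A -> Prop) (f : kQ k V A -> kQ k V A),
    (forall x, in_ideal rho x -> J x) ->
    (forall x y, J x -> J y -> J (kadd x y)) ->
    (forall c x, J x -> J (kscale c x)) ->
    (forall x r, J x -> J (kmul x r)) ->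
    (forall x y, J x -> J y -> kcongr rho x y -> kcongr rho (f x) (f y)) ->
    (forall x y, J x -> J y -> kcongr rho (f (kadd x y)) (kadd (f x) (f y))) ->
    (forall c x, J x -> kcongr rho (f (kscale c x)) (kscale c (f x))) ->
    (forall x r, J x -> kcongr rho (f (kmul x r)) (kmul (f x) r)) ->
    exists a, forall x, J x -> kcongr rho (f x) (kmul a x).

(* Loewy length of kQ/(rho) (graded by path length, radical = arrow ideal)
   equals m: all paths of length m vanish, some path of length m-1 does not. *)
Definition loewy_length (rho : kQ k V A -> Prop) (m : nat) : Prop :=
  (forall p, is_path sa ta p -> plen p = m -> in_ideal rho (kpath p)) /\
  (exists p, is_path sa ta p /\ plen p = m.-1 /\ ~ in_ideal rho (kpath p)).

(* (V, A, rho) is the bound quiver of a graded self-injective algebra of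
   Loewy length n+2 (i.e. a stable n-translation quiver; its n-translation
   tau is the induced Nakayama permutation and is not needed below). *)
Definition stable_ntrans_quiver (rho : kQ k V A -> Prop) (n : nat) : Prop :=
  [/\ forall r, rho r -> relation_ok r,
      self_injective rho & loewy_length rho n.+2].

End PathAlgebra.

From HB Require Import structures.
From mathcomp Require Import all_boot all_order all_algebra.
From mathcomp Require Import ring zify.
From Stdlib Require Import Classical ClassicalEpsilon.
Set Implicit Arguments.
Unset Strict Implicit.
Unset Printing Implicit Defensive.
Import Order.TTheory GRing.Theory Num.Theory.
Local Open Scope ring_scope.

(* Call a bound path w a socle path if w p = 0 in A = kQ/(rho) for every
   nontrivial path p.  Bound paths have length at most n+1, so every bound path
   q extends at its source to a socle path q u.  Baer's criterion for the
   self-injective algebra A says: if every d with X d = 0 also has z d = 0, then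
   z = a X for some a.  For a socle path z, z d = lambda z with lambda the
   coefficient of e_s(z) in d, and q d = 0 forces this coefficient to vanish
   when q is bound; hence z = a q whenever z and q start at the same vertex,
   and a homogeneous component of this identity gives a bound path u such that
   u q has the target and length of z.  For two socle paths with a common
   source this yields equal lengths and equal targets.  Every vertex is the
   target of a socle path, so "source of the socle path ending at j" is an
   injection of the finite vertex set, hence a bijection.  Part (1) extends q0
   and q1 to socle paths, which share their target, hence their source and
   length; part (2) factors the socle path starting at s(q1) = s(q2) through
   q1 and through q2. *)

Section BoundQuiver.
Variables (k : fieldType) (V A : finType) (sa ta : A -> V).
Local Notation qp := (qpath V A).
Local Notation kq := (kQ k V A).
Local Notation path := (is_path sa ta).
Local Notation tg := (ptgt ta).
Local Notation pm := (pmul ta).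
Local Notation km := (kmul ta).

Lemma ptgt_cat v s1 s2 : tg (v, s1 ++ s2) = tg (tg (v, s1), s2).
Proof. by rewrite /ptgt foldl_cat. Qed.

Lemma walk_ok_cat v s1 s2 :
  walk_ok sa ta v (s1 ++ s2) = walk_ok sa ta v s1 && walk_ok sa ta (tg (v, s1)) s2.
Proof. by elim: s1 v => [|a s1 IH] v //=; rewrite IH andbA. Qed.

Lemma pmulP q p w : pm q p = Some w ->
  [/\ tg p = psrc q, w = (p.1, p.2 ++ q.2), psrc w = psrc p, tg w = tg q
    & plen w = (plen p + plen q)%N].
Proof.
case: p q => [p1 p2] [q1 q2]; rewrite /pmul; case: eqP => // Hpq [<-].
by split; rewrite // ?ptgt_cat ?Hpq // /plen size_cat.
Qed.

Lemma pmul_path q p w : pm q p = Some w -> path w = path p && path q.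
Proof.
by case: p q => [p1 p2] [q1 q2] /pmulP [Hpq -> _ _ _]; rewrite /is_path walk_ok_cat Hpq.
Qed.

Lemma pmul_trivr w : pm w (psrc w, [::]) = Some w.
Proof. by rewrite /pmul eqxx; case: w. Qed.

(* Associativity of the partial product, observed through any [H] that sends
   undefined products to [t0]. *)
Lemma pmulA T (t0 : T) (H : qp -> T) e f g :
  oapp (fun u => oapp H t0 (pm u g)) t0 (pm e f) =
  oapp (fun u => oapp H t0 (pm e u)) t0 (pm f g).
Proof.
case: e f g => [e1 e2] [f1 f2] [g1 g2]; rewrite /pmul /psrc /=.
case: (eqVneq (tg (f1, f2)) e1) => Hfe; case: (eqVneq (tg (g1, g2)) f1) => Hgf //=.
- by rewrite /pmul /psrc /= Hgf eqxx ptgt_cat Hgf Hfe eqxx catA.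
- by rewrite /pmul /psrc /= (negbTE Hgf).
- by rewrite /pmul /psrc /= ptgt_cat Hgf (negbTE Hfe).
Qed.

Implicit Types (x y z d : kq) (p q v w : qp) (c : k) (H : qp -> k).

Definition keval x H : k := \sum_(e <- x) e.1 * H e.2.

Lemma kcoefE x w : kcoef x w = keval x (fun v => (v == w)%:R).
Proof.
rewrite /kcoef /keval big_mkcond; apply: eq_bigr => e _.
by case: eqP; rewrite ?mulr1 ?mulr0.
Qed.

Lemma keval_cat x y H : keval (x ++ y) H = keval x H + keval y H.
Proof. exact: big_cat. Qed.

Lemma keval_kscale c x H : keval (kscale c x) H = c * keval x H.
Proof. by rewrite /keval big_map mulr_sumr; apply: eq_bigr => e _; rewrite mulrA. Qed.

Lemma keval_kpath p H : keval (kpath p) H = H p.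
Proof. by rewrite /keval big_seq1 mul1r. Qed.

Lemma eq_keval x H1 H2 : H1 =1 H2 -> keval x H1 = keval x H2.
Proof. by move=> E; apply: eq_bigr => e _; rewrite E. Qed.

Lemma keval0 x : keval x (fun _ => 0) = 0.
Proof. by rewrite /keval big1 // => e _; rewrite mulr0. Qed.

Lemma kevalZr x c H : keval x (fun v => c * H v) = c * keval x H.
Proof. by rewrite /keval mulr_sumr; apply: eq_bigr => e _; rewrite mulrCA. Qed.

Lemma kevalDr x H1 H2 : keval x (fun v => H1 v + H2 v) = keval x H1 + keval x H2.
Proof. by rewrite /keval -big_split; apply: eq_bigr => e _; rewrite mulrDr. Qed.

Lemma keval_sumr (I : Type) (s : seq I) x (F : I -> qp -> k) :
  keval x (fun v => \sum_(i <- s) F i v) = \sum_(i <- s) keval x (F i).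
Proof. by rewrite /keval exchange_big; apply: eq_bigr => e _; rewrite mulr_sumr. Qed.

Lemma keval_flatten (I : Type) (F : I -> kq) s H :
  keval (flatten (map F s)) H = \sum_(i <- s) keval (F i) H.
Proof. by rewrite /keval big_flatten big_map. Qed.

Lemma keval_filter (P : pred qp) x H :
  keval [seq e <- x | P e.2] H = keval x (fun v => if P v then H v else 0).
Proof.
by rewrite /keval big_filter big_mkcond; apply: eq_bigr => e _; case: (P e.2); rewrite ?mulr0.
Qed.

Lemma keval_kmul x y H :
  keval (km x y) H = keval x (fun e => keval y (fun f => oapp H 0 (pm e f))).
Proof.
rewrite /keval /kmul big_flatten big_map; apply: eq_bigr => e _.
rewrite big_pmap mulr_sumr; apply: eq_bigr => f _.
by case: (pm e.2 f.2) => [u|] /=; rewrite ?mulr0 // mulrA.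
Qed.

Lemma keval_kmulA x y z H : keval (km (km x y) z) H = keval (km x (km y z)) H.
Proof.
rewrite !keval_kmul; apply: eq_keval => e; rewrite keval_kmul; apply: eq_keval => f.
transitivity (keval z (fun g => oapp (fun u => oapp H 0 (pm u g)) 0 (pm e f))).
  by case: (pm e f) => [u|] //=; rewrite keval0.
by apply: eq_keval => g; apply: pmulA.
Qed.

Lemma keval_neq0 x H : keval x H != 0 -> exists2 e, e \in x & H e.2 != 0.
Proof.
move=> Hn; apply: NNPP => Hno; move/eqP: Hn; apply.
rewrite /keval big_seq big1 // => e ex.
by case: (eqVneq (H e.2) 0) => [->|HN]; [rewrite mulr0 | case: Hno; exists e].
Qed.

Lemma keval_regroup x H (S : seq qp) : uniq S -> {subset map snd x <= S} ->
  keval x H = \sum_(v <- S) kcoef x v * H v.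
Proof.
move=> uS; elim: x => [|e x IH] sub.
  by rewrite /keval big_nil big1 // => v _; rewrite /kcoef big_nil mul0r.
have eS : e.2 \in S by apply: sub; rewrite inE eqxx.
rewrite /keval big_cons -/(keval x H) IH => [|v xv]; last by apply: sub; rewrite inE xv orbT.
rewrite [RHS](eq_bigr (fun v => (e.2 == v)%:R * e.1 * H v + kcoef x v * H v)) => [|v _]; last first.
  by rewrite /kcoef big_cons; case: eqP; rewrite ?mul1r ?mul0r ?add0r // mulrDl.
rewrite big_split /=; congr (_ + _).
rewrite (big_rem _ eS) /= eqxx mul1r big1_seq ?addr0 // => v /andP [_ Hv].
by case: eqP Hv => [<-|_ _]; rewrite ?(mem_rem_uniqF _ uS) ?mul0r.
Qed.

Lemma keval_ext x y H : (forall v, path v -> kcoef x v = kcoef y v) ->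
  (forall v, H v != 0 -> path v) -> keval x H = keval y H.
Proof.
move=> E HP; pose S := undup (map snd (x ++ y)).
have uS : uniq S by apply: undup_uniq.
rewrite (keval_regroup H uS) => [|v xv]; last by rewrite mem_undup map_cat mem_cat xv.
rewrite (keval_regroup H uS) => [|v yv]; last by rewrite mem_undup map_cat mem_cat yv orbT.
apply: eq_bigr => v _; case: (eqVneq (H v) 0) => [->|/HP Hv]; first by rewrite !mulr0.
by rewrite E.
Qed.

Definition sandwich (a b : qp) H v : k := oapp (fun u => oapp H 0 (pm u b)) 0 (pm a v).

Lemma keval_sandwich a b x H :
  keval (km (km (kpath a) x) (kpath b)) H = keval x (sandwich a b H).
Proof.
rewrite keval_kmul (eq_keval _ (H2 := fun e => oapp H 0 (pm e b))) => [|e].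
  by rewrite keval_kmul keval_kpath.
exact: keval_kpath.
Qed.

Lemma sandwich_neq0 a b H v : sandwich a b H v != 0 ->
  exists u w, [/\ pm a v = Some u, pm u b = Some w & H w != 0].
Proof.
rewrite /sandwich; case Ea: (pm a v) => [u|] /=; last by rewrite eqxx.
by case Eb: (pm u b) => [w|] /=; [exists u, w | rewrite eqxx].
Qed.

Lemma sandwich_comp a a' b b' H v :
  sandwich a' b' (sandwich a b H) v =
  match pm a a', pm b' b with Some a'', Some b'' => sandwich a'' b'' H v | _, _ => 0 end.
Proof.
case: a a' b b' v => [a1 a2] [t1 t2] [b1 b2] [s1 s2] [v1 v2].
rewrite /sandwich /pmul /psrc /=.
case: (eqVneq (tg (v1, v2)) t1) => Hv; case: (eqVneq (tg (s1, s2)) v1) => Hs;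
case: (eqVneq (tg (t1, t2)) a1) => Ha; case: (eqVneq (tg (b1, b2)) s1) => Hb;
do 4 rewrite /= /pmul /psrc /= ?ptgt_cat ?Hv ?Hs ?Ha ?Hb ?eqxx ?catA
  ?(negbTE Hv) ?(negbTE Hs) ?(negbTE Ha) ?(negbTE Hb) //.
Qed.

Lemma kcoefD x y w : kcoef (kadd x y) w = kcoef x w + kcoef y w.
Proof. by rewrite !kcoefE keval_cat. Qed.

Lemma kcoefZ c x w : kcoef (kscale c x) w = c * kcoef x w.
Proof. by rewrite !kcoefE keval_kscale. Qed.

Lemma kcoefB x y w : kcoef (ksub x y) w = kcoef x w - kcoef y w.
Proof. by rewrite kcoefD kcoefZ mulN1r. Qed.

Lemma kcoef_kpath p w : kcoef (kpath p : kq) w = (p == w)%:R.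
Proof. by rewrite kcoefE keval_kpath. Qed.

Lemma kcoef_nil w : kcoef ([::] : kq) w = 0.
Proof. by rewrite /kcoef big_nil. Qed.

Lemma kcoef_kmul_nil x w : kcoef (km x [::]) w = 0.
Proof.
by rewrite kcoefE keval_kmul -[RHS](keval0 x); apply: eq_keval => e; rewrite /keval big_nil.
Qed.

Lemma kcoef_kmulDl x y z w : kcoef (km (kadd x y) z) w = kcoef (km x z) w + kcoef (km y z) w.
Proof. by rewrite /kmul map_cat flatten_cat kcoefD. Qed.

Lemma kcoef_kmulDr x y z w : kcoef (km z (kadd x y)) w = kcoef (km z x) w + kcoef (km z y) w.
Proof. by rewrite !kcoefE !keval_kmul -kevalDr; apply: eq_keval => e; rewrite keval_cat. Qed.

Lemma kcoef_kmulZl c x z w : kcoef (km (kscale c x) z) w = c * kcoef (km x z) w.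
Proof. by rewrite !kcoefE !keval_kmul keval_kscale. Qed.

Lemma kcoef_kmulZr c x z w : kcoef (km z (kscale c x)) w = c * kcoef (km z x) w.
Proof. by rewrite !kcoefE !keval_kmul -kevalZr; apply: eq_keval => e; rewrite keval_kscale. Qed.

Lemma kcoef_kmulBl x y z w : kcoef (km (ksub x y) z) w = kcoef (km x z) w - kcoef (km y z) w.
Proof. by rewrite kcoef_kmulDl kcoef_kmulZl mulN1r. Qed.

Lemma kcoef_kmulBr x y z w : kcoef (km z (ksub x y)) w = kcoef (km z x) w - kcoef (km z y) w.
Proof. by rewrite kcoef_kmulDr kcoef_kmulZr mulN1r. Qed.

Lemma kcoef_kmulA x y z w : kcoef (km (km x y) z) w = kcoef (km x (km y z)) w.
Proof. by rewrite !kcoefE keval_kmulA. Qed.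

Definition kunit : kq := [seq (1, (i, [::])) | i <- enum V].

Lemma kcoef_kmul_unit x w : kcoef (km x kunit) w = kcoef x w.
Proof.
rewrite !kcoefE keval_kmul; apply: eq_keval => e.
rewrite /keval big_map (eq_bigr (fun i => if e.1 == i then (e == w)%:R else 0)) => [|i _].
  by rewrite -big_mkcond big_enum_cond (big_pred1 e.1) // => i; rewrite inE eq_sym.
rewrite mul1r /pmul /psrc /ptgt /= eq_sym.
by case: (eqVneq e.1 i) => //= <-; rewrite -surjective_pairing.
Qed.

Lemma mem_kmul x y g : g \in km x y ->
  exists e f, [/\ e \in x, f \in y & pm e.2 f.2 = Some g.2].
Proof.
move=> /flattenP [s /mapP [e ex ->]]; rewrite mem_pmap => /mapP [f fy].
by case Ef: (pm e.2 f.2) => [u|] //= [->]; exists e, f.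
Qed.

Section Ideal.
Variable rho : kq -> Prop.
Local Notation I := (in_ideal sa ta rho).

Lemma in_ideal_ext x y : I x -> (forall w, path w -> kcoef y w = kcoef x w) -> I y.
Proof. by move=> [ts [Hts Hc]] E; exists ts; split => // w Hw; rewrite E // Hc. Qed.

Lemma in_ideal_nil : I [::].
Proof. by exists [::]; split => // w _; rewrite big_nil kcoef_nil. Qed.

Lemma in_idealD x y : I x -> I y -> I (kadd x y).
Proof.
move=> [ts [Hts Hc]] [ts' [Hts' Hc']]; exists (ts ++ ts'); split.
  by move=> t; rewrite mem_cat => /orP [/Hts|/Hts'].
by move=> w Hw; rewrite kcoefD big_cat Hc // Hc'.
Qed.

Lemma in_idealZ c x : I x -> I (kscale c x).
Proof.
move=> [ts [Hts Hc]]; exists [seq (c * t.1.1.1, t.1.1.2, t.1.2, t.2) | t <- ts]; split.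
  by move=> t /mapP [t' /Hts H ->].
move=> w Hw; rewrite kcoefZ Hc // big_map mulr_sumr.
by apply: eq_bigr => t _; rewrite mulrA.
Qed.

Lemma in_ideal_lin2 c1 c2 x y z : I x -> I y ->
  (forall w, path w -> kcoef z w = c1 * kcoef x w + c2 * kcoef y w) -> I z.
Proof.
move=> Hx Hy E; apply: (in_ideal_ext (in_idealD (in_idealZ c1 Hx) (in_idealZ c2 Hy))) => w Hw.
by rewrite E // kcoefD !kcoefZ.
Qed.

Lemma in_ideal_flatten (T : eqType) (F : T -> kq) (s : seq T) :
  (forall i, i \in s -> I (F i)) -> I (flatten (map F s)).
Proof.
elim: s => [|i s IH] H /=; first exact: in_ideal_nil.
apply: in_idealD; first by apply: H; rewrite inE eqxx.
by apply: IH => j Hj; apply: H; rewrite inE Hj orbT.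
Qed.

Lemma in_ideal_support z : (forall e, e \in z -> I (kpath e.2)) -> I z.
Proof.
move=> H; have : I (flatten (map (fun e => kscale e.1 (kpath e.2)) z)).
  by apply: in_ideal_flatten => e He; apply/in_idealZ/H.
move=> HI; apply: (in_ideal_ext HI) => w _; rewrite !kcoefE keval_flatten.
by apply: eq_bigr => e _; rewrite keval_kscale keval_kpath.
Qed.

Lemma in_ideal_nonpath w : ~~ path w -> I (kpath w).
Proof.
move=> Hw; apply: (in_ideal_ext in_ideal_nil) => v Hv.
by rewrite kcoef_kpath kcoef_nil; case: eqP Hw => // ->; rewrite Hv.
Qed.

(* The product a r b of a summand t = (c, a, r, b) of an [in_ideal] witness. *)
Definition ideal_term (t : k * qp * kq * qp) : kq := km (km (kpath t.1.1.2) t.1.2) (kpath t.2).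

Lemma in_ideal_sandwich x a b : I x -> path a -> path b -> I (km (km (kpath a) x) (kpath b)).
Proof.
move=> [ts [Hts Hc]] Ha Hb.
pose h (t : k * qp * kq * qp) := match pm a t.1.1.2, pm t.2 b with
  | Some a', Some b' => Some (t.1.1.1, a', t.1.2, b') | _, _ => None end.
exists (pmap h ts); split.
  move=> t'; rewrite mem_pmap => /mapP [t Ht]; rewrite /h.
  case E1: (pm a _) => [a'|] //; case E2: (pm _ b) => [b'|] // [->] /=.
  have [Hr Hat Hbt] := Hts t Ht.
  by rewrite (pmul_path E1) (pmul_path E2) Ha Hat Hbt Hb.
move=> w Hw; pose y := flatten [seq kscale t.1.1.1 (ideal_term t) | t <- ts].
rewrite kcoefE keval_sandwich (@keval_ext x y); first last.
- move=> v /sandwich_neq0 [u [w' [E1 E2]]]; case: (eqVneq w' w) => [Ew _|]; last by rewrite eqxx.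
  by move: Hw; rewrite -Ew (pmul_path E2) (pmul_path E1) => /and3P [].
- move=> v Hv; rewrite Hc // kcoefE keval_flatten.
  by apply: eq_bigr => t _; rewrite keval_kscale kcoefE.
rewrite keval_flatten big_pmap; apply: eq_bigr => t _.
rewrite keval_kscale /ideal_term keval_sandwich (eq_keval _ (sandwich_comp _ _ _ _ _)).
rewrite /h; case: (pm a t.1.1.2) => [a'|]; case: (pm t.2 b) => [b'|] /=;
  rewrite ?keval0 ?mulr0 //.
by rewrite kcoefE keval_sandwich.
Qed.

Lemma in_ideal_kmul_path x b : I x -> path b -> I (km x (kpath b)).
Proof.
move=> Hx Hb.
(* x b = \sum_u e_u x b *)
pose y := flatten (map (fun u : V => km (km (kpath (u, [::])) x) (kpath b)) (enum V)).
have Hy : I y by apply: in_ideal_flatten => u _; apply: in_ideal_sandwich.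
apply: (in_ideal_ext Hy) => w Hw; rewrite !kcoefE keval_kmul /y keval_flatten.
under eq_bigr => u _ do rewrite keval_sandwich.
rewrite -keval_sumr; apply: eq_keval => v; rewrite keval_kpath.
rewrite (eq_bigr (fun u => if tg v == u then oapp (fun u0 => (u0 == w)%:R) 0 (pm v b) else 0)).
  by rewrite -big_mkcond big_enum_cond (big_pred1 (tg v)) // => u; rewrite inE eq_sym.
move=> u _; rewrite /sandwich /pmul /psrc /=; case: eqP => //= _.
by rewrite cats0.
Qed.

Lemma in_ideal_kmulr x y : I x -> I (km x y).
Proof.
move=> Hx.
pose z := flatten (map (fun f => kscale f.1 (km x (kpath f.2))) [seq f <- y | path f.2]).
have Hz : I z.
  apply: in_ideal_flatten => f; rewrite mem_filter => /andP [Hf _].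
  exact/in_idealZ/in_ideal_kmul_path.
apply: (in_ideal_ext Hz) => w Hw; rewrite !kcoefE keval_kmul /z keval_flatten.
rewrite (@eq_keval x _ (fun e => \sum_(f <- y) f.1 * oapp (fun u => (u == w)%:R) 0 (pm e f.2))) //.
rewrite keval_sumr big_filter [RHS]big_mkcond; apply: eq_bigr => f _.
rewrite kevalZr; case: ifP => Hf.
  by rewrite keval_kscale keval_kmul; congr (_ * _); apply: eq_keval => e; rewrite keval_kpath.
transitivity (f.1 * keval x (fun _ => 0)); last by rewrite keval0 mulr0.
congr (_ * _); apply: eq_keval => e.
case E: (pm e f.2) => [u|] //=; case: (eqVneq u w) => // Eu.
by move: Hw; rewrite -Eu (pmul_path E) Hf.
Qed.

Local Notation kc := (kcongr sa ta rho).

Lemma kcongr_coef x y : (forall w, path w -> kcoef x w = kcoef y w) -> kc x y.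
Proof.
move=> E; apply: (in_ideal_ext in_ideal_nil) => w Hw.
by rewrite kcoefB E // subrr kcoef_nil.
Qed.

Lemma kcongr_sym x y : kc x y -> kc y x.
Proof.
by move=> H; apply: (in_ideal_lin2 (c1 := -1) (c2 := 0) H H) => w _; rewrite !kcoefB; ring.
Qed.

Lemma kcongr_trans y x z : kc x y -> kc y z -> kc x z.
Proof.
by move=> H1 H2; apply: (in_ideal_lin2 (c1 := 1) (c2 := 1) H1 H2) => w _; rewrite !kcoefB; ring.
Qed.

Lemma kcongrD x x' y y' : kc x x' -> kc y y' -> kc (kadd x y) (kadd x' y').
Proof.
move=> H1 H2; apply: (in_ideal_lin2 (c1 := 1) (c2 := 1) H1 H2) => w _.
by rewrite !kcoefB !kcoefD; ring.
Qed.

Lemma kcongrZ c x x' : kc x x' -> kc (kscale c x) (kscale c x').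
Proof.
by move=> H; apply: (in_ideal_lin2 (c1 := c) (c2 := 0) H H) => w _; rewrite !kcoefB !kcoefZ; ring.
Qed.

Lemma kcongr_kmull y x x' : kc x x' -> kc (km x y) (km x' y).
Proof.
move=> /(in_ideal_kmulr y) H; apply: (in_ideal_ext H) => w _.
by rewrite kcoefB kcoef_kmulBl.
Qed.

Section AnnihilatorFactor.
Hypothesis rho_selfinj : self_injective sa ta rho.
Variables X z : kq.
Hypothesis annX_annz : forall d, I (km X d) -> I (km z d).

Lemma kcongr_ann d d' : kc (km X d) (km X d') -> kc (km z d) (km z d').
Proof.
move=> H; have /annX_annz Hz : I (km X (ksub d d')).
  by apply: (in_ideal_ext H) => w _; rewrite kcoefB kcoef_kmulBr.
by apply: (in_ideal_ext Hz) => w _; rewrite kcoef_kmulBr kcoefB.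
Qed.

(* Baer's criterion is applied to the right ideal X A + (rho) and to the map
   X d |-> z d, which is well defined by [annX_annz]. *)
Definition in_rideal x := exists d, kc x (km X d).

Definition rideal_coef x : kq :=
  if excluded_middle_informative (in_rideal x) is left H
  then proj1_sig (constructive_indefinite_description _ H) else [::].

Lemma rideal_coefP x : in_rideal x -> kc x (km X (rideal_coef x)).
Proof.
rewrite /rideal_coef; case: excluded_middle_informative => // H _.
by case: constructive_indefinite_description.
Qed.

Definition rideal_map x := km z (rideal_coef x).

Lemma rideal_mapE x d : kc x (km X d) -> kc (rideal_map x) (km z d).
Proof.
move=> Hx; apply: kcongr_ann; apply: (kcongr_trans (y := x)) => //.
by apply/kcongr_sym/rideal_coefP; exists d.
Qed.

Lemma in_rideal_ideal x : I x -> in_rideal x.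
Proof.
move=> Hx; exists [::]; apply: (in_ideal_ext Hx) => w _.
by rewrite kcoefB kcoef_kmul_nil subr0.
Qed.

Lemma in_ridealD x y : in_rideal x -> in_rideal y -> in_rideal (kadd x y).
Proof.
move=> [dx Hx] [dy Hy]; exists (kadd dx dy); apply: kcongr_trans (kcongrD Hx Hy) _.
by apply: kcongr_coef => w _; rewrite kcoefD kcoef_kmulDr.
Qed.

Lemma in_ridealZ c x : in_rideal x -> in_rideal (kscale c x).
Proof.
move=> [d Hx]; exists (kscale c d); apply: kcongr_trans (kcongrZ c Hx) _.
by apply: kcongr_coef => w _; rewrite kcoefZ kcoef_kmulZr.
Qed.

Lemma in_ridealM x y : in_rideal x -> in_rideal (km x y).
Proof.
move=> [d Hx]; exists (km d y); apply: kcongr_trans (kcongr_kmull y Hx) _.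
by apply: kcongr_coef => w _; rewrite kcoef_kmulA.
Qed.

Lemma rideal_map_congr x y : in_rideal x -> kc x y -> kc (rideal_map x) (rideal_map y).
Proof.
move=> /rideal_coefP Hx Hxy; apply/kcongr_sym/rideal_mapE.
exact: kcongr_trans (kcongr_sym Hxy) Hx.
Qed.

Lemma rideal_mapD x y : in_rideal x -> in_rideal y ->
  kc (rideal_map (kadd x y)) (kadd (rideal_map x) (rideal_map y)).
Proof.
move=> /rideal_coefP Hx /rideal_coefP Hy.
have Hxy : kc (kadd x y) (km X (kadd (rideal_coef x) (rideal_coef y))).
  by apply: kcongr_trans (kcongrD Hx Hy) (kcongr_coef _) => w _; rewrite kcoefD kcoef_kmulDr.
by apply: kcongr_trans (rideal_mapE Hxy) (kcongr_coef _) => w _; rewrite kcoefD kcoef_kmulDr.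
Qed.

Lemma rideal_mapZ c x : in_rideal x ->
  kc (rideal_map (kscale c x)) (kscale c (rideal_map x)).
Proof.
move=> /rideal_coefP Hx; have Hcx : kc (kscale c x) (km X (kscale c (rideal_coef x))).
  by apply: kcongr_trans (kcongrZ c Hx) (kcongr_coef _) => w _; rewrite kcoefZ kcoef_kmulZr.
by apply: kcongr_trans (rideal_mapE Hcx) (kcongr_coef _) => w _; rewrite kcoefZ kcoef_kmulZr.
Qed.

Lemma rideal_mapM x y : in_rideal x -> kc (rideal_map (km x y)) (km (rideal_map x) y).
Proof.
move=> /rideal_coefP Hx; have Hxy : kc (km x y) (km X (km (rideal_coef x) y)).
  by apply: kcongr_trans (kcongr_kmull y Hx) (kcongr_coef _) => w _; rewrite kcoef_kmulA.
by apply: kcongr_trans (rideal_mapE Hxy) (kcongr_coef _) => w _; rewrite kcoef_kmulA.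
Qed.

Lemma annihilator_factor : exists a, kc z (km a X).
Proof.
have [a Ha] := rho_selfinj in_rideal_ideal in_ridealD in_ridealZ in_ridealM
  (fun x y Hx _ => rideal_map_congr Hx) rideal_mapD rideal_mapZ rideal_mapM.
exists a; have HX : kc X (km X kunit) by apply: kcongr_coef => w _; rewrite kcoef_kmul_unit.
apply: kcongr_trans _ (Ha X (ex_intro _ kunit HX)).
apply/kcongr_sym/(kcongr_trans (rideal_mapE HX)).
by apply: kcongr_coef => w _; rewrite kcoef_kmul_unit.
Qed.

End AnnihilatorFactor.

Lemma in_ideal_pmulr p u w : I (kpath u) -> path p -> pm u p = Some w -> I (kpath w).
Proof.
move=> Hu Hp E; apply: (in_ideal_ext (in_ideal_kmul_path Hu Hp)) => v _.
by rewrite !kcoefE keval_kmul !keval_kpath E.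
Qed.

Lemma in_ideal_pmull q u w : I (kpath u) -> path q -> pm q u = Some w -> I (kpath w).
Proof.
move=> Hu Hq E; have := in_ideal_sandwich Hu Hq (isT : path (psrc u, [::])).
move/in_ideal_ext; apply => v _.
have [_ _ Ew _ _] := pmulP E.
by rewrite !kcoefE keval_sandwich !keval_kpath /sandwich E /= -Ew pmul_trivr.
Qed.

Lemma bound_pmul q p w : bound sa ta rho w -> pm q p = Some w ->
  bound sa ta rho q /\ bound sa ta rho p.
Proof.
move=> [Hw Hnw] E; move: Hw; rewrite (pmul_path E) => /andP [Hp Hq].
split; split => // HI; apply: Hnw.
  exact: in_ideal_pmulr HI Hp E.
exact: in_ideal_pmull HI Hq E.
Qed.

Definition hcomp (P : V -> V -> nat -> bool) x : kq :=
  [seq e <- x | P (psrc e.2) (tg e.2) (plen e.2)].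

Lemma kcoef_hcomp P x w :
  kcoef (hcomp P x) w = if P (psrc w) (tg w) (plen w) then kcoef x w else 0.
Proof.
rewrite !kcoefE (keval_filter (fun v => P (psrc v) (tg v) (plen v))).
case: ifP => Hw; last rewrite -[RHS](keval0 x); apply: eq_keval => v;
  by case: (eqVneq v w) => [->|_]; rewrite ?Hw //; case: ifP.
Qed.

Section Homogeneous.
Hypothesis rho_rel : forall r, rho r -> relation_ok sa ta r.

Definition rdeg (r : kq) : nat := if r is e :: _ then plen e.2 else 0.

Lemma plen_rel r e : rho r -> e \in r -> plen e.2 = rdeg r.
Proof.
move=> /rho_rel [i [j [l [_ Hall]]]].
have Hr f : f \in r -> plen f.2 = l by move/(allP Hall) => /and4P [_ _ _ /eqP].
by case: r Hall Hr => [|f r] //= _ Hr /Hr ->; rewrite Hr // inE eqxx.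
Qed.

Lemma rdeg_ge2 r : rho r -> r != [::] -> (2 <= rdeg r)%N.
Proof.
case: r => [|e r] // /rho_rel [i [j [l [Hl Hall]]]] _.
by move: Hall => /= /andP [/and4P [_ _ _ /eqP ->] _].
Qed.

Lemma ideal_term_support t w : rho t.1.2 -> kcoef (ideal_term t) w != 0 ->
  [/\ psrc w = psrc t.2, tg w = tg t.1.1.2,
      plen w = (plen t.1.1.2 + rdeg t.1.2 + plen t.2)%N & (2 <= rdeg t.1.2)%N].
Proof.
move=> Hr; rewrite kcoefE keval_sandwich => /keval_neq0 [e er].
case/sandwich_neq0 => [u [w' [E1 E2]]]; case: (eqVneq w' w) => [<- _|]; last by rewrite eqxx.
have [_ _ _ t1 l1] := pmulP E1; have [_ _ s2 t2 l2] := pmulP E2.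
have He := plen_rel Hr er; have Hr2 : (2 <= rdeg t.1.2)%N.
  by apply: rdeg_ge2 => //; apply: contraTneq er => ->.
by split; rewrite // ?t2 ?t1 // l2 l1 He; lia.
Qed.

(* The relations are homogeneous, so each summand c a r b of a witness lies in
   a single degree (source, target, length): filtering the summands by degree
   filters the element. *)
Lemma in_ideal_hcomp P x : I x -> I (hcomp P x).
Proof.
move=> [ts [Hts Hc]].
exists [seq t <- ts | P (psrc t.2) (tg t.1.1.2) (plen t.1.1.2 + rdeg t.1.2 + plen t.2)%N].
split=> [t|w Hw]; first by rewrite mem_filter => /andP [_ /Hts].
rewrite kcoef_hcomp big_filter big_mkcond.
have E t : t \in ts ->
    (if P (psrc w) (tg w) (plen w) then t.1.1.1 * kcoef (ideal_term t) w else 0) =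
    if P (psrc t.2) (tg t.1.1.2) (plen t.1.1.2 + rdeg t.1.2 + plen t.2)%N
    then t.1.1.1 * kcoef (ideal_term t) w else 0.
  move=> /Hts [Hr _ _]; case: (eqVneq (kcoef (ideal_term t) w) 0) => [->|Hnz].
    by rewrite mulr0; case: ifP; case: ifP.
  by case: (ideal_term_support Hr Hnz) => -> -> -> _.
rewrite -(eq_big_seq _ E) -big_mkcond /=.
by case: ifP => _; rewrite ?Hc // big_pred0.
Qed.

Lemma bound_triv j : bound sa ta rho (j, [::]).
Proof.
split=> // -[ts [Hts /(_ (j, [::]) isT)]]; rewrite kcoef_kpath eqxx.
rewrite big_seq big1 => [/eqP|t Ht]; first by rewrite oner_eq0.
case: (eqVneq (kcoef (ideal_term t) (j, [::])) 0) => [->|Hn]; first by rewrite mulr0.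
have [Hr _ _] := Hts t Ht.
by case: (ideal_term_support Hr Hn) => _ _; rewrite /plen /=; lia.
Qed.

Lemma kcoef_kpath_kmul q d v : (plen v <= plen q)%N ->
  kcoef (km (kpath q) d) v = kcoef d (psrc q, [::]) * (q == v)%:R.
Proof.
move=> Hl; rewrite kcoefE keval_kmul keval_kpath kcoefE mulrC -kevalZr.
apply: eq_keval => -[x [|b s]]; last first.
  rewrite xpair_eqE andbF mulr0.
  case E: (pm q _) => [u|] //=; case: (eqVneq u v) => // Eu.
  by have [_ _ _ _] := pmulP E; move: Hl; rewrite Eu /plen /=; lia.
rewrite /pmul /psrc /=; case: (eqVneq x q.1) => [->|Hx] /=.
  by rewrite -surjective_pairing eqxx mulr1.
by rewrite (_ : (x, [::]) == _ = false) ?mulr0 //; apply: contraNF Hx => /eqP [->].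
Qed.

Lemma bound_kscale_eq0 c w : bound sa ta rho w -> I (kscale c (kpath w)) -> c = 0.
Proof.
move=> [_ Hw] Hc; apply: NNPP => /eqP Hc0; apply: Hw.
apply: (in_ideal_ext (in_idealZ c^-1 Hc)) => v _.
by rewrite !kcoefZ mulrA mulVf // mul1r.
Qed.

Lemma bound_annihilator q d : bound sa ta rho q -> I (km (kpath q) d) ->
  kcoef d (psrc q, [::]) = 0.
Proof.
move=> Hq /(in_ideal_hcomp (fun _ _ l => l == plen q)) Hd; apply: (bound_kscale_eq0 Hq).
apply: (in_ideal_ext Hd) => v _; rewrite kcoefZ kcoef_kpath kcoef_hcomp.
case: ifP => [/eqP El|Hl]; first by rewrite kcoef_kpath_kmul ?El.
by case: eqP => [Eqv|_]; [rewrite Eqv eqxx in Hl | rewrite mulr0].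
Qed.

Lemma kcongr_path_factor (z : qp) q (a : kq) : kc (kpath z) (km a (kpath q)) ->
  ~ I (kpath z) ->
  exists u v, [/\ pm u q = Some v, bound sa ta rho v, tg v = tg z & plen v = plen z].
Proof.
move=> Hzaq Hz; apply: NNPP => Hno; apply: Hz.
pose P (_ t : V) (l : nat) := (t == tg z) && (l == plen z).
have Haq : I (hcomp P (km a (kpath q))).
  apply: in_ideal_support => g; rewrite mem_filter => /andP [/andP [/eqP Et /eqP El]].
  case/mem_kmul => e [f [_]]; rewrite mem_seq1 => /eqP -> E.
  case Hg: (path g.2); last exact/in_ideal_nonpath/negbT.
  by apply: NNPP => Hn; apply: Hno; exists e.2, g.2.
apply: (in_ideal_lin2 (c1 := 1) (c2 := 1) (in_ideal_hcomp P Hzaq) Haq) => v _.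
rewrite !kcoef_hcomp kcoefB kcoef_kpath; case: ifP => [_|/negbT HP]; first by ring.
by case: (eqVneq z v) HP => [<-|_ _]; rewrite ?/P ?eqxx // !mulr0 addr0.
Qed.

(* w rad(A) = 0, i.e. w spans a simple submodule of the right socle of A. *)
Definition socle_path w := bound sa ta rho w /\
  forall p u, path p -> (0 < plen p)%N -> pm w p = Some u -> I (kpath u).

Lemma socle_path_annihilator w d : socle_path w -> kcoef d (psrc w, [::]) = 0 ->
  I (km (kpath w) d).
Proof.
move=> [_ Hsoc] Hd; pose P (_ _ : V) (l : nat) := (plen w < l)%N.
have Hlong : I (hcomp P (km (kpath w) d)).
  apply: in_ideal_support => g; rewrite mem_filter => /andP [Hg /mem_kmul [e [f [+ _]]]].
  rewrite mem_seq1 => /eqP -> E.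
  case Hf: (path f.2); last by apply: in_ideal_nonpath; rewrite (pmul_path E) Hf.
  have [_ _ _ _ Hl] := pmulP E; apply: Hsoc Hf _ E.
  by move: Hg; rewrite /P Hl /=; lia.
apply: (in_ideal_ext Hlong) => v _; rewrite kcoef_hcomp /P.
by case: ltnP => // Hv; rewrite kcoef_kpath_kmul // Hd mul0r.
Qed.

Section SelfInjective.
Hypothesis rho_selfinj : self_injective sa ta rho.

Lemma socle_path_factor (z : qp) q : socle_path z -> bound sa ta rho q -> psrc z = psrc q ->
  exists u, [/\ bound sa ta rho u, psrc u = tg q, tg u = tg z & (plen u + plen q)%N = plen z].
Proof.
move=> Hz Hq Es; have [a Ha] : exists a, kc (kpath z) (km a (kpath q)).
  apply: annihilator_factor => // d /(bound_annihilator Hq) Hd.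
  by apply: socle_path_annihilator; rewrite ?Es.
have [u [v [E Hv Et El]]] := kcongr_path_factor Ha (proj2 (proj1 Hz)).
have [[Hu _] [Eq _ _ Etv Elv]] := (bound_pmul Hv E, pmulP E).
by exists u; split; rewrite // -?Etv // -El Elv addnC.
Qed.

Lemma socle_path_plen w w' : socle_path w -> socle_path w' -> psrc w = psrc w' ->
  plen w = plen w'.
Proof.
move=> Hw Hw' Es.
have [u [_ _ _ Hlu]] := socle_path_factor Hw' (proj1 Hw) (esym Es).
have [u' [_ _ _ Hlu']] := socle_path_factor Hw (proj1 Hw') Es.
lia.
Qed.

Lemma socle_path_tgt w w' : socle_path w -> socle_path w' -> psrc w = psrc w' -> tg w = tg w'.
Proof.
move=> Hw Hw' Es; have El := socle_path_plen Hw Hw' Es.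
have [u [_ Hsu Htu Hlu]] := socle_path_factor Hw' (proj1 Hw) (esym Es).
by case: u Hsu Htu Hlu => x [|b s] <- <- //; rewrite El /plen /=; lia.
Qed.

Section Loewy.
Variable n : nat.
Hypothesis rho_loewy : forall p, path p -> plen p = n.+2 -> I (kpath p).

Lemma long_path_in_ideal w : path w -> (n.+2 <= plen w)%N -> I (kpath w).
Proof.
move=> Hw Hl; set m := (plen w - n.+2)%N.
have E : pm (tg (w.1, take m w.2), drop m w.2) (w.1, take m w.2) = Some w.
  by rewrite /pmul /psrc /= eqxx cat_take_drop -surjective_pairing.
move: Hw; rewrite (pmul_path E) => /andP [Hhead Htail].
apply: in_ideal_pmulr Hhead E; apply: rho_loewy => //.
by move: Hl; rewrite /plen /= size_drop /m /plen; lia.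
Qed.

Lemma bound_plen w : bound sa ta rho w -> (plen w <= n.+1)%N.
Proof. by move=> [Hw Hn]; rewrite leqNgt; apply: contra_notN Hn; apply: long_path_in_ideal. Qed.

Lemma socle_extension w : bound sa ta rho w ->
  exists u w', [/\ path u, pm w u = Some w' & socle_path w'].
Proof.
have [N] := ubnP (n.+2 - plen w); elim: N w => // N IH w HN Hw.
case: (classic (exists p v,
    [/\ path p, (0 < plen p)%N, pm w p = Some v & ~ I (kpath v)])); last first.
  move=> Hno; exists (psrc w, [::]), w; split => //; first exact: pmul_trivr.
  by split => // p v Hp Hl E; apply: NNPP => Hv; apply: Hno; exists p, v.
move=> [p [v [Hp Hl E Hv]]].
have Hbv : bound sa ta rho v by split; rewrite // (pmul_path E) Hp (proj1 Hw).
have [u [w' [Hu E' Hw']]] : exists u w', [/\ path u, pm v u = Some w' & socle_path w'].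
  have [[_ _ _ _ lv] Hvn] := (pmulP E, bound_plen Hbv).
  by apply: IH Hbv; move: HN Hvn; rewrite lv; lia.
have := pmulA None Some w p u; rewrite E /= E'.
case Epu: (pm p u) => [pu|] //= Ew'; exists pu, w'; split => //.
  by rewrite (pmul_path Epu) Hu Hp.
by case: (pm w pu) Ew' => [?|] //= [->].
Qed.

Lemma exists_socle_path_to j : exists z : qp, socle_path z /\ tg z = j.
Proof.
have [u [z [_ E Hz]]] := socle_extension (bound_triv j).
by exists z; have [_ _ _ -> _] := pmulP E.
Qed.

Definition socle_to j : qp :=
  proj1_sig (constructive_indefinite_description _ (exists_socle_path_to j)).

Lemma socle_toP j : socle_path (socle_to j) /\ tg (socle_to j) = j.
Proof. by rewrite /socle_to; case: constructive_indefinite_description. Qed.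

Definition socle_src j := psrc (socle_to j).

Lemma socle_src_inj : injective socle_src.
Proof.
move=> j1 j2 E; have [H1 <-] := socle_toP j1; have [H2 <-] := socle_toP j2.
exact: socle_path_tgt.
Qed.

Lemma socle_src_onto i : exists j, socle_src j = i.
Proof. by have /codomP [j ->] := injF_onto socle_src_inj i; exists j. Qed.

Lemma socle_path_srcE w : socle_path w -> psrc w = socle_src (tg w).
Proof.
move=> Hw; have [j Ej] := socle_src_onto (psrc w); have [Hj Etj] := socle_toP j.
by rewrite -(socle_path_tgt Hj Hw) ?Etj.
Qed.

Lemma bound_extend_common_source q0 q1 :
  bound sa ta rho q0 -> bound sa ta rho q1 -> tg q0 = tg q1 ->
  exists u0 u1, [/\ bound sa ta rho u0 /\ bound sa ta rho u1, psrc u0 = psrc u1,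
    tg u0 = psrc q0, tg u1 = psrc q1 & (plen u0 + plen q0 = plen u1 + plen q1)%N].
Proof.
move=> Hq0 Hq1 Et.
have [u0 [w0 [_ E0 Hw0]]] := socle_extension Hq0.
have [u1 [w1 [_ E1 Hw1]]] := socle_extension Hq1.
have [[t0 _ s0 tw0 l0] [t1 _ s1 tw1 l1]] := (pmulP E0, pmulP E1).
have Es : psrc w0 = psrc w1 by rewrite !socle_path_srcE // tw0 tw1 Et.
exists u0, u1; split=> //; last by rewrite -l0 -l1; apply: socle_path_plen.
  by split; [apply: (bound_pmul (proj1 Hw0) E0).2 | apply: (bound_pmul (proj1 Hw1) E1).2].
by rewrite -s0 -s1.
Qed.

Lemma bound_extend_common_target q1 q2 :
  bound sa ta rho q1 -> bound sa ta rho q2 -> psrc q1 = psrc q2 ->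
  exists u1 u2, [/\ bound sa ta rho u1 /\ bound sa ta rho u2, tg u1 = tg u2,
    psrc u1 = tg q1, psrc u2 = tg q2 & (plen u1 + plen q1 = plen u2 + plen q2)%N].
Proof.
move=> Hq1 Hq2 Es; have [j Ej] := socle_src_onto (psrc q1); have [Hz _] := socle_toP j.
have [u1 [Hu1 Su1 Tu1 Lu1]] := socle_path_factor Hz Hq1 Ej.
have [u2 [Hu2 Su2 Tu2 Lu2]] := socle_path_factor Hz Hq2 (etrans Ej Es).
by exists u1, u2; split; rewrite ?Tu1 ?Tu2 ?Lu1 ?Lu2.
Qed.

End Loewy.

End SelfInjective.

End Homogeneous.

End Ideal.

End BoundQuiver.

Unset Implicit Arguments.

Theorem lemma4p2 (k : fieldType) (V A : finType) (sa ta : A -> V)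
  (rho : kQ k V A -> Prop) (n : nat) :
  stable_ntrans_quiver sa ta rho n ->
  (forall p0 p0' q0 p1 p1' q1 : qpath V A,
      is_path sa ta p0' -> is_path sa ta p1' ->
      pmul ta q0 p0' = Some p0 -> pmul ta q1 p1' = Some p1 ->
      ptgt ta p0 = ptgt ta p1 ->
      bound sa ta rho q0 -> bound sa ta rho q1 ->
      (0 < plen q0 <= n.+1)%N -> (0 < plen q1 <= n.+1)%N ->
      exists p0'' p1'' : qpath V A,
        bound sa ta rho p0'' /\ bound sa ta rho p1'' /\
            psrc p0'' = psrc p1'' /\ ptgt ta p0'' = ptgt ta p0' /\
            ptgt ta p1'' = ptgt ta p1' /\
            (plen p0)%:Z - (plen p1)%:Z =
            (plen p0')%:Z - (plen p0'')%:Z + (plen p1'')%:Z - (plen p1')%:Z)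
  /\
  (forall p1 p1' q1 p2 p2' q2 : qpath V A,
      is_path sa ta p1' -> is_path sa ta p2' ->
      pmul ta p1' q1 = Some p1 -> pmul ta p2' q2 = Some p2 ->
      psrc p1 = psrc p2 ->
      bound sa ta rho q1 -> bound sa ta rho q2 ->
      (0 < plen q1 <= n.+1)%N -> (0 < plen q2 <= n.+1)%N ->
      exists p1'' p2'' : qpath V A,
        bound sa ta rho p1'' /\ bound sa ta rho p2'' /\
            ptgt ta p1'' = ptgt ta p2'' /\ psrc p1'' = psrc p1' /\
            psrc p2'' = psrc p2' /\
            (plen p1)%:Z - (plen p2)%:Z =
            (plen p1')%:Z - (plen p1'')%:Z + (plen p2'')%:Z - (plen p2')%:Z).
Proof.
move=> [rho_rel rho_selfinj [rho_loewy _]]; split.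
  move=> p0 p0' q0 p1 p1' q1 _ _ E0 E1 Et Hq0 Hq1 _ _.
  have [[t0 _ _ tp0 l0] [t1 _ _ tp1 l1]] := (pmulP E0, pmulP E1).
  have Eq : ptgt ta q0 = ptgt ta q1 by rewrite -tp0 -tp1.
  have [u0 [u1 [[Hu0 Hu1] Es Tu0 Tu1 El]]] :=
    bound_extend_common_source rho_rel rho_selfinj rho_loewy Hq0 Hq1 Eq.
  exists u0, u1; do 5 (split; rewrite ?Tu0 ?Tu1 //).
  by move: El; rewrite l0 l1; lia.
move=> p1 p1' q1 p2 p2' q2 _ _ E1 E2 Es Hq1 Hq2 _ _.
have [[t1 _ s1 _ l1] [t2 _ s2 _ l2]] := (pmulP E1, pmulP E2).
have Eq : psrc q1 = psrc q2 by rewrite -s1 -s2.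
have [u1 [u2 [[Hu1 Hu2] Et Su1 Su2 El]]] :=
  bound_extend_common_target rho_rel rho_selfinj rho_loewy Hq1 Hq2 Eq.
exists u1, u2; do 5 (split; rewrite ?Su1 ?Su2 //).
by move: El; rewrite l1 l2; lia.
Qed.
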